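(* Let $(x_n)_{n\ge1}$ be a sequence of integers. Then the set $$A=\Big\{\alpha\in\mathbb{R} : \delta_{\min}^{\alpha}(N)<\frac{1}{N^{2-o(1)}}\Big\}$$ either has Lebesgue measure zero or has full Lebesgue measure (its complement has measure zero).
   Context: For $x\in\mathbb{R}$, $\|x\|=\min_{k\in\mathbb{Z}}|x-k|$. For $\alpha\in\mathbb{R}$, $\delta_{\min}^{\alpha}(N)=\min\{\|\alpha x_m-\alpha x_n\| : 1\le m,n\le N,\ m\ne n\}$. The condition $\delta_{\min}^{\alpha}(N)<\frac{1}{N^{2-o(1)}}$ means there is a function $f_\alpha(N)\to0$ as $N\to\infty$ such that $\delta_{\min}^{\alpha}(N)<N^{-(2-f_\alpha(N))}$ for all sufficiently large $N$. *)

From HB Require Import structures.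
From mathcomp Require Import all_boot all_order all_algebra.
From mathcomp Require Import all_classical all_reals all_analysis.
Set Implicit Arguments. Unset Strict Implicit. Unset Printing Implicit Defensive.
Import Order.TTheory GRing.Theory Num.Theory.
Local Open Scope classical_set_scope.
Local Open Scope ring_scope.

(* ||x|| = min_{k in Z} |x - k| = min (x - floor x, ceil x - x) *)
Definition distZ {R : realType} (x : R) : R :=
  Num.min (x - (Num.floor x)%:~R) ((Num.ceil x)%:~R - x).

(* delta_min^alpha(N) = min { ||alpha x_m - alpha x_n|| : 1 <= m,n <= N, m <> n }.
   (For N < 2 the set is empty and the value is the default 1; irrelevant,
   only large N matter.) *)
Definition delta_min {R : realType} (x : nat -> int) (alpha : R) (N : nat) : R :=
  \big[Num.min/1]_(1 <= m < N.+1)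
    \big[Num.min/1]_(1 <= n < N.+1 | m != n)
       distZ (alpha * (x m)%:~R - alpha * (x n)%:~R).

Definition small_gaps {R : realType} (x : nat -> int) (alpha : R) : Prop :=
  exists f : nat -> R, f n @[n --> \oo] --> 0%R /\
    \forall N \near \oo, delta_min x alpha N < (N%:R) `^ (- (2 - f N)).

From HB Require Import structures.
From mathcomp Require Import all_boot all_order all_algebra.
From mathcomp Require Import all_classical all_reals all_analysis.
From mathcomp Require Import measurable_realfun lebesgue_integral_differentiation.
From mathcomp Require Import ring lra zify.
Import Order.TTheory GRing.Theory Num.Theory numFieldNormedType.Exports.
Local Open Scope classical_set_scope.
Local Open Scope ring_scope.

(* Call S the set of alpha with small gaps.  Under alpha |-> k alpha + m (k >= 1,
   m integers) every difference alpha x_m - alpha x_n is multiplied by k and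
   shifted by an integer, so delta_min^(k alpha + m)(N) <= k delta_min^alpha(N);
   the factor k is swallowed by the N^(o(1)) slack, hence S is invariant under
   these maps.  S is also Borel: only the countably many rates 1/(j+1) matter.
   If S is not null it has a Lebesgue density point x0.  Take a ball B around x0
   of radius r with |B \ S| <= eps |B| and an integer k with 1 < 2 r k <= 2.
   Since k B has length > 1, every unit interval is covered by two translates
   k B + m, and by invariance the part of ~S in k B + m lies in k (B \ S) + m,
   of measure <= k eps |B| <= 2 eps.  So ~S meets every unit interval in a null
   set. *)

Section real_arithmetic.
Context {R : realType}.
Implicit Types (b c d e r t : R).

Lemma vanishing_majorant (g : nat -> R) :
  (forall e, 0 < e -> \forall n \near \oo, g n < e) ->
  exists2 f : nat -> R, f n @[n --> \oo] --> 0 & forall n, g n < f n.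
Proof.
move=> g_small; exists (fun n => Num.max 0 (g n) + harmonic n); last first.
  move=> n; apply: le_lt_trans (_ : g n <= Num.max 0 (g n)) _.
    by rewrite le_max lexx orbT.
  by rewrite ltrDl harmonic_gt0.
have max_cvg : Num.max 0 (g n) @[n --> \oo] --> 0.
  apply/cvgrPdist_le => e e0; near=> n.
  rewrite sub0r normrN ger0_norm ?le_max ?lexx // ge_max (ltW e0) /=.
  by apply: ltW; near: n; exact: g_small.
by rewrite -[X in _ --> X](addr0 0); exact: cvgD max_cvg cvg_harmonic.
Unshelve. all: by end_near.
Qed.

Lemma lt_powR_lnE d b t : 0 < d -> 1 < b -> (d < b `^ t) = (ln d / ln b < t).
Proof.
move=> d0 b1; have b0 : 0 < b by rewrite (lt_trans ltr01).
by rewrite ltr_pdivrMr ?ln_gt0 // -ln_powR ltr_ln // posrE powR_gt0.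
Qed.

Lemma powR_natr_ge c e : 0 < e -> \forall N \near \oo, c <= N%:R `^ e.
Proof.
move=> e0; have max_ge0 : 0 <= Num.max c 1 by rewrite le_max ler01 orbT.
near=> N; apply: (le_trans (_ : c <= Num.max c 1)); first by rewrite le_max lexx.
have -> : Num.max c 1 = (Num.max c 1 `^ e^-1) `^ e.
  by rewrite -powRrM mulVf ?powRr1 ?lt0r_neq0.
apply: ge0_ler_powR; rewrite ?nnegrE ?powR_ge0 ?(ltW e0) //.
by near: N; exact: nbhs_infty_ger.
Unshelve. all: by end_near.
Qed.

Lemma exists_int_scale r : 0 < r -> r <= 2^-1 ->
  exists2 k : int, 0 < k & 1 < 2 * r * k%:~R <= 2.
Proof.
move=> r0 r12; set s := (2 * r)^-1.
have s0 : 0 < s by rewrite invr_gt0 mulr_gt0.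
have rs : 2 * r * s = 1 by rewrite mulfV // gt_eqF // mulr_gt0.
exists (Num.floor s + 1).
  have : 0 <= Num.floor s by rewrite floor_ge0 ltW.
  lia.
have := floorD1_gt s; have := floor_le s; rewrite intrD1 => ? ?.
by apply/andP; split; nra.
Qed.

Lemma ball_affine_cover (x0 r k c b : R) : 0 < k -> 1 < 2 * r * k ->
  c <= b < c + 1 ->
  let m0 := Num.ceil (c - k * x0 + k * r) - 1 in
  ball x0 r ((b - m0%:~R) / k) \/ ball x0 r ((b - (m0 + 1)%:~R) / k).
Proof.
move=> k0 rk /andP[cb bc] m0.
have in_ball (m : int) : m%:~R < b - k * x0 + k * r <= m%:~R + 1 ->
    ball x0 r ((b - m%:~R) / k).
  move=> /andP[? ?]; rewrite /ball /= ltr_distlC ltr_pdivlMr // ltr_pdivrMr //.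
  by apply/andP; split; lra.
have /andP[? ?] : m0%:~R < c - k * x0 + k * r <= m0%:~R + 1.
  by rewrite -intrD1 subrK ceil_itv.
by case: (leP (b - k * x0 + k * r) (m0%:~R + 1)) => ?; [left|right];
  apply: in_ball; rewrite ?intrD1; apply/andP; split; lra.
Qed.

End real_arithmetic.

Section distance_to_integers.
Context {R : realType}.
Implicit Types (y z : R) (j k m : int).

Lemma distZ_le y j : distZ y <= `|y - j%:~R|.
Proof.
have fy := floor_le y; have cy := ceil_ge y.
rewrite /distZ ge_min; case: (leP j (Num.floor y)) => [jy|yj].
  rewrite -(ler_int R) in jy; rewrite ger0_norm ?subr_ge0 ?(le_trans jy) //.
  by apply/orP; left; lra.
have : Num.ceil y <= j.
  by rewrite ceil_floor; case: (y \isn't a Num.int); rewrite ?addr0 ?lezD1 // ltW.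
rewrite -(ler_int R) => yj'; rewrite ler0_norm ?subr_le0 ?(le_trans cy) //.
by apply/orP; right; lra.
Qed.

Lemma distZ_attained y : exists j, distZ y = `|y - j%:~R|.
Proof.
have fy := floor_le y; have cy := ceil_ge y.
rewrite /distZ; case: (leP (y - (Num.floor y)%:~R) ((Num.ceil y)%:~R - y)) => _.
  by exists (Num.floor y); rewrite ger0_norm // subr_ge0.
by exists (Num.ceil y); rewrite ler0_norm ?opprB // subr_le0.
Qed.

Lemma distZ_lipschitz y z : distZ y <= distZ z + `|y - z|.
Proof.
have [j ->] := distZ_attained z; apply: le_trans (distZ_le y j) _.
have -> : y - j%:~R = (y - z) + (z - j%:~R) by rewrite addrA subrK.
by rewrite [X in _ <= X]addrC ler_normD.
Qed.

Lemma distZ_addz y m : distZ (y + m%:~R) = distZ y.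
Proof.
have le_shift y' m' : distZ (y' + m'%:~R) <= distZ y'.
  have [j ->] := distZ_attained y'; apply: le_trans (distZ_le _ (j + m')) _.
  by rewrite intrD opprD addrACA subrr addr0.
by apply/le_anti; rewrite le_shift -{1}(addrK m%:~R y) -mulrNz le_shift.
Qed.

Lemma distZ_mulz_le y k : 0 <= k -> distZ (k%:~R * y) <= k%:~R * distZ y.
Proof.
move=> k0; have [j ->] := distZ_attained y.
apply: le_trans (distZ_le _ (k * j)) _.
by rewrite intrM -mulrBr normrM ger0_norm ?ler0z.
Qed.

Lemma continuous_distZ : continuous (@distZ R).
Proof.
move=> y; apply/cvgrPdist_le => e e0; near=> z.
have yz := distZ_lipschitz y z; have zy := distZ_lipschitz z y.
have : `|y - z| <= e by near: z; exists e => // t /= /ltW.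
rewrite distrC in zy => yze; rewrite ler_norml; apply/andP; split; lra.
Unshelve. all: by end_near.
Qed.

Lemma delta_min_affine_le (x : nat -> int) (a : R) k m N : 0 < k ->
  delta_min x (k%:~R * a + m%:~R) N <= k%:~R * delta_min x a N.
Proof.
move=> k0; have k0' : 0 <= k%:~R :> R by rewrite ler0z ltW.
pose le_k (u v : R) := u <= k%:~R * v.
have le_k1 : le_k 1 1 by rewrite /le_k mulr1 ler1z.
have le_k_min u1 v1 u2 v2 : le_k u1 v1 -> le_k u2 v2 ->
    le_k (Num.min u1 u2) (Num.min v1 v2).
  by rewrite /le_k minr_pMr // => uv1 uv2; rewrite le_min !ge_min uv1 uv2 orbT.
apply: (big_ind2 le_k le_k1 le_k_min) => i _.
apply: (big_ind2 le_k le_k1 le_k_min) => j _.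
have -> : (k%:~R * a + m%:~R) * (x i)%:~R - (k%:~R * a + m%:~R) * (x j)%:~R
    = k%:~R * (a * (x i)%:~R - a * (x j)%:~R) + (m * (x i - x j))%:~R.
  by rewrite intrM intrB; ring.
by rewrite /le_k distZ_addz distZ_mulz_le // ltW.
Qed.

Lemma measurable_fun_bigmin d (T : measurableType d) (I : Type) (s : seq I)
    (P : pred I) (c : R) (F : I -> T -> R) :
  (forall i, measurable_fun setT (F i)) ->
  measurable_fun setT (fun t => \big[Num.min/c]_(i <- s | P i) F i t).
Proof.
move=> mF; elim: s => [|i s IH].
  by under eq_fun do rewrite big_nil; exact: measurable_cst.
under eq_fun do rewrite big_cons.
by case: (P i) => //; exact: measurable_minr.
Qed.

Lemma measurable_delta_min (x : nat -> int) N :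
  measurable_fun setT (fun a : R => delta_min x a N).
Proof.
apply: measurable_fun_bigmin => i; apply: measurable_fun_bigmin => j.
apply: measurableT_comp; first exact: continuous_measurable_fun continuous_distZ.
by apply: measurable_funB; exact: measurable_funM.
Qed.

End distance_to_integers.

Section small_gaps_reformulation.
Context {R : realType}.
Implicit Types (x : nat -> int) (a e : R).

Definition small_gaps_with x a e : Prop :=
  \forall N \near \oo, delta_min x a N < N%:R `^ (- (2 - e)).

Lemma small_gaps_withW x a e1 e2 : e1 <= e2 ->
  small_gaps_with x a e1 -> small_gaps_with x a e2.
Proof.
move=> e12 gaps; near=> N.
apply: lt_le_trans (_ : delta_min x a N < N%:R `^ (- (2 - e1))) _; first by near: N.
apply: ler_powR; last by lra.
by rewrite ler1n; near: N; exact: nbhs_infty_ge.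
Unshelve. all: by end_near.
Qed.

(* The e with delta_min x a N = N^-(2 - e); the value 0 when delta_min x a N = 0
   is arbitrary, as then every bound N^-(2 - e) holds. *)
Definition gap_exponent x a N : R :=
  if 0 < delta_min x a N then 2 + ln (delta_min x a N) / ln N%:R else 0.

Lemma gap_exponent_lt x a N e : (1 < N)%N -> 0 < e ->
  delta_min x a N < N%:R `^ (- (2 - e)) -> gap_exponent x a N < e.
Proof.
rewrite /gap_exponent => N1 e0; case: ifP => // d0.
by rewrite lt_powR_lnE ?ltr1n //; lra.
Qed.

Lemma delta_min_lt_powR x a N e : (1 < N)%N ->
  gap_exponent x a N < e -> delta_min x a N < N%:R `^ (- (2 - e)).
Proof.
rewrite /gap_exponent => N1; case: ifPn => [d0|].
  by rewrite lt_powR_lnE ?ltr1n //; lra.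
by rewrite -leNgt => d0 _; rewrite (le_lt_trans d0) // powR_gt0 // ltr0n ltnW.
Qed.

Lemma small_gapsP x a : small_gaps x a <-> forall e, 0 < e -> small_gaps_with x a e.
Proof.
split => [[f [f0 gaps]] e e0|gaps].
  near=> N.
  apply: lt_le_trans (_ : delta_min x a N < N%:R `^ (- (2 - f N))) _; first by near: N.
  apply: ler_powR; first by rewrite ler1n; near: N; exact: nbhs_infty_ge.
  suff : f N < e by lra.
  by near: N; exact: cvgr_lt f0 _ e0.
have exponent_small e : 0 < e -> \forall N \near \oo, gap_exponent x a N < e.
  move=> e0; near=> N; apply: gap_exponent_lt => //; last by near: N; exact: gaps.
  by near: N; exact: nbhs_infty_gt.
have [f f0 gf] := vanishing_majorant _ exponent_small.
exists f; split => //; near=> N; apply: delta_min_lt_powR (gf N).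
by near: N; exact: nbhs_infty_gt.
Unshelve. all: by end_near.
Qed.

Lemma small_gaps_harmonicP x a :
  small_gaps x a <-> forall j, small_gaps_with x a (harmonic j).
Proof.
rewrite small_gapsP; split => [gaps j|gaps e e0]; first exact/gaps/harmonic_gt0.
near \oo => j; apply: small_gaps_withW (gaps j); apply: ltW.
by near: j; exact: cvgr_lt cvg_harmonic _ e0.
Unshelve. all: by end_near.
Qed.

Lemma measurable_small_gaps x : measurable [set a : R | small_gaps x a].
Proof.
pose U j M := \bigcap_(N in [set N | (M <= N)%N])
  [set a : R | delta_min x a N < N%:R `^ (- (2 - harmonic j))].
have -> : [set a | small_gaps x a] = \bigcap_j \bigcup_M U j M.
  apply/seteqP; split => a /=.
    by move=> /small_gaps_harmonicP gaps j _; have [M _ HM] := gaps j; exists M.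
  move=> gaps; apply/small_gaps_harmonicP => j; have [M _ HM] := gaps j I.
  by exists M.
apply: bigcapT_measurable => j; apply: bigcupT_measurable => M.
apply: bigcap_measurable => [|N _]; first by exists M => /=.
rewrite -[X in measurable X]setTI.
exact: (measurable_fun_ltr (measurable_delta_min x N) (measurable_cst _)).
Qed.

Lemma small_gaps_affine x a (k m : int) : 0 < k ->
  small_gaps x a -> small_gaps x (k%:~R * a + m%:~R).
Proof.
move=> k0 /small_gapsP gaps; apply/small_gapsP => e e0.
have e20 : 0 < e / 2 by rewrite divr_gt0.
near=> N.
have N0 : 0 < N%:R :> R by rewrite ltr0n; near: N; exact: nbhs_infty_gt.
apply: le_lt_trans (delta_min_affine_le x a k m N k0) _.
apply: lt_le_trans (_ : _ < k%:~R * N%:R `^ (- (2 - e / 2))) _.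
  by rewrite ltr_pM2l ?ltr0z //; near: N; exact: gaps.
have -> : - (2 - e) = e / 2 + - (2 - e / 2) by field.
rewrite powRD ?(gt_eqF N0) ?implybT // ler_pM2r ?powR_gt0 //.
by near: N; exact: powR_natr_ge.
Unshelve. all: by end_near.
Qed.

End small_gaps_reformulation.

Section lebesgue_measure_lemmas.
Context {R : realType}.
Local Notation mu := (@lebesgue_measure R).

Lemma lebesgue_measure_affine_preimage (k m : R) (E : set R) :
  0 < k -> measurable E -> mu [set b | E ((b - m) / k)] = (k%:E * mu E)%E.
Proof.
move=> k0 mE; pose f b := (b - m) / k.
have mf : measurable_fun setT f by apply: measurable_funM => //; exact: measurable_funB.
have kV0 : 0 <= k^-1 by rewrite invr_ge0 ltW.
have [nu nuE] : exists nu : {measure set (measurableTypeR R) -> \bar R},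
    forall A, nu A = (k^-1%:E * mu (f @^-1` A))%E.
  by unshelve eexists (mscale (NngNum kV0) (pushforward mu (f : R -> measurableTypeR R)
    : {measure set (measurableTypeR R) -> \bar R})).
have itv_preimage a b : f @^-1` `]a, b]%classic = `]k * a + m, k * b + m]%classic.
  apply/seteqP; split => y /=; rewrite !in_itv /= ?ltr_pdivlMr ?ler_pdivrMr //.
    by move=> /andP[? ?]; apply/andP; split; lra.
  by move=> /andP[? ?]; apply/andP; split; lra.
have mu_nu : forall A, measurable A -> mu A = nu A.
  apply: lebesgue_measure_unique => _ [[a b] _ <-] /=.
  rewrite nuE itv_preimage !lebesgue_measure_itv /= !lte_fin ltrD2r ltr_pM2l //.
  case: ifP => _; last by rewrite mule0.
  by rewrite -EFinD -EFinM; congr (_%:E); field; exact: lt0r_neq0.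
by rewrite (mu_nu E mE) nuE muleA -EFinM divff ?mul1e // lt0r_neq0.
Qed.

Lemma lebesgue_density1_ball_setD (A : set R) (x0 : R) : measurable A ->
  (mu (A `&` ball x0 r) * (mu (ball x0 r))^-1)%E @[r --> 0^'+] --> 1%:E ->
  forall eta, 0 < eta ->
  \forall r \near 0^'+, (mu (ball x0 r `\` A) <= (eta * (r *+ 2))%:E)%E.
Proof.
move=> mA /fine_cvgP[_ dens] eta eta0; near=> r.
have density_large : 1 - eta < fine (mu (A `&` ball x0 r) * (mu (ball x0 r))^-1)%E.
  by near: r; apply: (cvgr_gt _ dens); lra.
have r0 : 0 < r by near: r; exact: nbhs_right_gt.
have muB := lebesgue_measure_ball x0 (ltW r0).
have AB_fin : mu (A `&` ball x0 r) \is a fin_num.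
  rewrite ge0_fin_numE ?measure_ge0 //.
  apply: (@le_lt_trans _ _ (mu (ball x0 r))); last by rewrite muB ltry.
  by apply: measureIr => //; exact: measurable_ball.
have ratio : 1 - eta < fine (mu (A `&` ball x0 r)) / (r *+ 2).
  by move: density_large; rewrite -(fineK AB_fin) muB inver mulrn_eq0 /= gt_eqF // -EFinM.
have muD : mu (ball x0 r `\` A) = (mu (ball x0 r) - mu (ball x0 r `&` A))%E.
  rewrite measureD //; first exact: measurable_ball.
  by change (mu (ball x0 r) < +oo)%E; rewrite muB ltry.
rewrite muD muB setIC -(fineK AB_fin) -EFinB lee_fin.
by move: ratio; rewrite ltr_pdivlMr ?mulrn_wgt0 //; lra.
Unshelve. all: by end_near.
Qed.

Lemma negligible_unit_intervals (A : set R) : measurable A ->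
  (forall c, mu (A `&` `[c, c + 1[) = 0%E) ->
  mu.-negligible A.
Proof.
move=> mA A0.
have nA c : mu.-negligible (A `&` `[c, c + 1[).
  by apply/negligibleP; [apply: measurableI => //; exact: measurable_itv | exact: A0].
apply: negligibleS (negligibleU (negligible_bigcup (fun n => nA n%:R))
                                (negligible_bigcup (fun n => nA (- n.+1%:R)))).
move=> y Ay; have := floor_itv y; rewrite intrD1.
case: (Num.floor y) => n; rewrite ?NegzE ?intrN -pmulrn => yn; [left|right].
  by exists n => //; split.
by exists n => //; split => //=; rewrite in_itv.
Qed.

End lebesgue_measure_lemmas.

Lemma not_negligible_ae_exists {d} {T : measurableType d} {R : realFieldType}
    {mu : {measure set T -> \bar R}} {A : set T} {P : T -> Prop} :
  {ae mu, forall x, P x} -> ~ mu.-negligible A -> exists2 x, A x & P x.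
Proof.
move=> aeP nA; apply: contrapT => noP; apply: nA; apply: negligibleS aeP.
by move=> x Ax Px; apply: noP; exists x.
Qed.

Section affine_invariant_null_or_conull.
Context {R : realType}.
Local Notation mu := (@lebesgue_measure R).
Variable S : set R.
Hypothesis mS : measurable S.
Hypothesis S_affine : forall a (k m : int), 0 < k -> S a -> S (k%:~R * a + m%:~R).

Lemma affine_invariant_complement_null (x0 : R) :
  (mu (S `&` ball x0 r) * (mu (ball x0 r))^-1)%E @[r --> 0^'+] --> 1%:E ->
  forall c, mu (~` S `&` `[c, c + 1[) = 0%E.
Proof.
move=> dens c.
apply/eqP; rewrite eq_le measure_ge0 andbT; apply/lee_addgt0Pr => e e0.
have e40 : 0 < e / 4 by rewrite divr_gt0.
near (0 : R)^'+ => r.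
have r0 : 0 < r by near: r; exact: nbhs_right_gt.
have r12 : r <= 2^-1 by near: r; apply: nbhs_right_le; rewrite invr_gt0.
have BS_small : (mu (ball x0 r `\` S) <= (e / 4 * (r *+ 2))%:E)%E.
  by near: r; exact: lebesgue_density1_ball_setD.
have [k k0 /andP[rk1 rk2]] := exists_int_scale r r0 r12.
have kR0 : 0 < k%:~R :> R by rewrite ltr0z.
pose P (m : int) := [set b : R | (ball x0 r `\` S) ((b - m%:~R) / k%:~R)].
have mBS : measurable (ball x0 r `\` S) by apply: measurableD => //; exact: measurable_ball.
have mP m : measurable (P m).
  rewrite -[X in measurable X]setTI; apply: (measurable_funM _ (measurable_cst _)) => //.
  exact: measurable_funB.
have muP m : (mu (P m) <= (e / 2)%:E)%E.
  rewrite lebesgue_measure_affine_preimage //.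
  apply: le_trans (lee_wpmul2l _ BS_small) _; first by rewrite lee_fin ltW.
  by rewrite -EFinM lee_fin; nra.
set m0 := Num.ceil (c - k%:~R * x0 + k%:~R * r) - 1.
have cover : ~` S `&` `[c, c + 1[ `<=` P m0 `|` P (m0 + 1).
  move=> b [nSb]; rewrite /= in_itv /= => cb.
  have outside_S m : ball x0 r ((b - m%:~R) / k%:~R) -> P m b.
    move=> Bm; split => // Sm; apply: nSb.
    by have := S_affine _ _ m k0 Sm; rewrite mulrC divfK ?subrK // gt_eqF.
  by case: (ball_affine_cover x0 _ _ _ _ kR0 rk1 cb) => ?; [left|right];
    exact: outside_S.
rewrite add0e; apply: (@le_trans _ _ (mu (P m0 `|` P (m0 + 1)))).
  apply: le_measure; rewrite ?inE //; last exact: measurableU (mP _) (mP _).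
  by apply: measurableI; [exact: measurableC | exact: measurable_itv].
apply: (@le_trans _ _ (mu (P m0) + mu (P (m0 + 1)%R))%E).
  by apply: measureU2; apply: mP.
by apply: le_trans (leeD (muP _) (muP _)) _; rewrite -EFinD lee_fin; lra.
Unshelve. all: by end_near.
Qed.

Lemma affine_invariant_null_or_conull : mu.-negligible S \/ mu.-negligible (~` S).
Proof.
have [S0|S_pos] := pselect (mu.-negligible S); [by left | right].
have [x0 Sx0 dens] := not_negligible_ae_exists (lebesgue_density mS) S_pos.
rewrite indicE mem_set // in dens.
apply: negligible_unit_intervals; first exact: measurableC.
exact: affine_invariant_complement_null dens.
Qed.

End affine_invariant_null_or_conull.

Theorem theorem8 (R : realType) (x : nat -> int) :
  (lebesgue_measure : set R -> \bar R).-negligible [set alpha : R | small_gaps x alpha]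
  \/ (lebesgue_measure : set R -> \bar R).-negligible (~` [set alpha : R | small_gaps x alpha]).
Proof.
apply: affine_invariant_null_or_conull; first exact: measurable_small_gaps.
by move=> a k m k0; exact: small_gaps_affine.
Qed.
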